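(* Let $\Sigma$ be a set of prime numbers, $S$ the multiplicative submonoid of $\mathbb{N}$ generated by $\Sigma$, $\mathbb{Z}[S^{-1}]\subset\mathbb{Q}$ the localization, and $\mathbb{A}_{f}=\prod'_{q\in\Sigma}(\mathbb{Q}_q,\mathbb{Z}_q)$. Let $Q$ be a locally compact topological $\mathbb{A}_f$-module and let $C$ be any compact open subgroup of $Q$. Then $Q$ is generated by $C$ as a $\mathbb{Z}[S^{-1}]$-module. In particular, $Q$ is compactly generated over $\mathbb{Z}[S^{-1}]$ and $\sigma$-compact.
   Context: All topological groups are Hausdorff. The restricted product consists of families $(x_q)$ with $x_q\in\mathbb{Q}_q$ and $x_q\in\mathbb{Z}_q$ for almost all $q$, with neighbourhood basis of $0$ the sets $\prod U_q$ with $U_q$ open neighbourhood of $0$ in $\mathbb{Q}_q$ and $U_q=\mathbb{Z}_q$ for almost all $q$; it is a locally compact topological ring containing $\mathbb{Z}[S^{-1}]$ diagonally. A locally compact topological module is a locally compact abelian group with continuous scalar multiplication. *)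

From HB Require Import structures.
From mathcomp Require Import all_boot all_order all_algebra.
From mathcomp Require Import all_classical all_reals all_analysis.
Set Implicit Arguments. Unset Strict Implicit. Unset Printing Implicit Defensive.
Import Order.TTheory GRing.Theory Num.Theory.
Local Open Scope classical_set_scope.
Local Open Scope ring_scope.

(* q-adic numbers, represented by their digit expansions               *)
(*   x = sum_{k in Z} (x k) q^k,  0 <= x k < q, x k = 0 for k << 0.     *)
(* This representation is canonical (Leibniz equality = equality in Q_q). *)

Definition digits := int -> nat.

Definition isQq (q : nat) (d : digits) : Prop :=
  (forall k, (d k < q)%N) /\ exists m : int, forall k : int, k < m -> d k = 0%N.

Definition isZq (q : nat) (d : digits) : Prop :=
  isQq q d /\ forall k : int, k < 0 -> d k = 0%N.

(* k-th q-adic digit of a rational r (r in Z_(q)[1/q] = Q, viewed in Q_q):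
   r = n / (q^e d') with d' coprime to q; digit k of r is digit (k+e) of
   the q-adic integer n * d'^{-1}, computed modulo q^(k+e+1), d'^{-1} being
   d'^(phi(M)-1) mod M (Euler). *)
Definition qdig (q : nat) (r : rat) (k : int) : nat :=
  let n := numq r in
  let dn := `|denq r|%N in
  let e := logn q dn in
  let d' := (dn %/ q ^ e)%N in
  let j := k + e%:Z in
  if j < 0 then 0%N else
  let jn := `|j|%N in
  let M := (q ^ jn.+1)%N in
  let res := ((n * ((d' ^ (totient M).-1)%N)%:Z) %% M%:Z)%Z in
  `|(res %/ (q ^ jn)%N%:Z)%Z|%N.

Definition psum (q : nat) (d : digits) (N : nat) : rat :=
  \sum_(i < (N + N)%N) ((d (i%:Z - N%:Z))%:R * (q%:R : rat) ^ (i%:Z - N%:Z)).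

Definition evval (u : nat -> nat) : nat :=
  xget 0%N [set v | exists N0, forall N, (N0 <= N)%N -> u N = v].

(* ring operations of Q_q, as limits of the operations on truncations *)
Definition qadd (q : nat) (x y : digits) : digits :=
  fun k => evval (fun N => qdig q (psum q x N + psum q y N) k).
Definition qmul (q : nat) (x y : digits) : digits :=
  fun k => evval (fun N => qdig q (psum q x N * psum q y N) k).

(* open subsets of Q_q (q-adic topology: balls x + q^n Z_q are the sets of
   digit expansions agreeing with x below n) *)
Definition qopen (q : nat) (U : set digits) : Prop :=
  U `<=` isQq q /\
  forall x, U x -> exists n : int, forall y, isQq q y ->
     (forall k : int, k < n -> y k = x k) -> U y.

Definition dzero : digits := fun _ => 0%N.

(* The finite adeles A_f = prod'_{q in Sigma} (Q_q, Z_q), as families   *)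
(* indexed by nat, zero at indices outside Sigma.                       *)

Definition adele := nat -> digits.

Definition inAf (Sigma : set nat) (x : adele) : Prop :=
  (forall q, ~ Sigma q -> x q = dzero) /\
  (forall q, Sigma q -> isQq q (x q)) /\
  finite_set [set q | Sigma q /\ ~ isZq q (x q)].

Definition afadd (Sigma : set nat) (x y : adele) : adele :=
  fun q => if `[< Sigma q >] then qadd q (x q) (y q) else dzero.
Definition afmul (Sigma : set nat) (x y : adele) : adele :=
  fun q => if `[< Sigma q >] then qmul q (x q) (y q) else dzero.

Definition afdiag (Sigma : set nat) (r : rat) : adele :=
  fun q => if `[< Sigma q >] then qdig q r else dzero.

Definition afbasic0 (Sigma : set nat) (V : set adele) : Prop :=
  exists U : nat -> set digits,
    (forall q, Sigma q -> qopen q (U q) /\ U q dzero) /\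
    finite_set [set q | Sigma q /\ U q <> isZq q] /\
    V = [set u | inAf Sigma u /\ forall q, Sigma q -> U q (u q)].

Inductive inS (Sigma : set nat) : nat -> Prop :=
| inS1 : inS Sigma 1
| inSmul p n : Sigma p -> inS Sigma n -> inS Sigma (p * n).

Definition inZSinv (Sigma : set nat) (r : rat) : Prop :=
  exists (a : int) (s : nat), inS Sigma s /\ r = a%:~R / s%:R.

(* act : A_f x Q -> Q is an A_f-module structure on Q, continuous for the
   product topology (A_f carrying the restricted product topology) *)
Definition Af_module (Sigma : set nat) (Q : topologicalZmodType)
    (act : adele -> Q -> Q) : Prop :=
  (forall a b x, inAf Sigma a -> inAf Sigma b ->
      act (afadd Sigma a b) x = act a x + act b x) /\
  (forall a x y, inAf Sigma a -> act a (x + y) = act a x + act a y) /\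
  (forall a b x, inAf Sigma a -> inAf Sigma b ->
      act (afmul Sigma a b) x = act a (act b x)) /\
  (forall x, act (afdiag Sigma 1) x = x) /\
  (forall a x, inAf Sigma a -> forall W, nbhs (act a x) W ->
      exists V, afbasic0 Sigma V /\ exists V', nbhs x V' /\
        forall u y, V u -> V' y -> W (act (afadd Sigma a u) y)).

Definition subgroup (Q : zmodType) (C : set Q) : Prop :=
  C 0 /\ forall x y, C x -> C y -> C (x - y).

Definition in_ZSinv_span (Sigma : set nat) (Q : topologicalZmodType)
    (act : adele -> Q -> Q) (K : set Q) (x : Q) : Prop :=
  exists s : seq (rat * Q),
    (forall p, p \in s -> inZSinv Sigma p.1 /\ K p.2) /\
    x = \sum_(p <- s) act (afdiag Sigma p.1) p.2.

From HB Require Import structures.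
From mathcomp Require Import all_boot all_order all_algebra.
From mathcomp Require Import all_classical all_reals all_analysis.
From mathcomp Require Import cyclic zify ring.
Set Implicit Arguments. Unset Strict Implicit. Unset Printing Implicit Defensive.
Import Order.TTheory GRing.Theory Num.Theory.
Local Open Scope classical_set_scope.
Local Open Scope ring_scope.

(* Continuity of the action at (0, x) yields a basic neighbourhood prod_q U_q
   of 0 in A_f with (0 + u) . x in C for all u in it.  Only finitely many U_q
   differ from Z_q, and each contains some q^(n_q) Z_q, so the diagonal image of
   s = prod_q q^(n_q), an element of S, lies in that neighbourhood: s . x is in C.
   The diagonal embedding of Q into A_f is multiplicative, so x = s^-1 . (s . x),
   and Q is the union of the compact sets n^-1 . C.  On digit expansions, both the
   multiplicativity and the neutrality of 0 reduce to the uniqueness of the residue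
   modulo q^j of a fraction a / b with b prime to q. *)

Lemma modn_exp_digits (q c L : nat) :
  (c %% q ^ L = \sum_(0 <= j < L) c %% q ^ j.+1 %/ q ^ j * q ^ j)%N.
Proof.
elim: L => [|L IH]; first by rewrite big_geq // expn0 modn1.
rewrite big_nat_recr //= -IH {1}(divn_eq (c %% q ^ L.+1) (q ^ L)) addnC.
by rewrite modn_dvdm // dvdn_exp2l.
Qed.

Lemma digits_sum_ltn (q j : nat) (x : nat -> nat) : (forall i, x i < q)%N ->
  (\sum_(0 <= i < j) x i * q ^ i < q ^ j)%N.
Proof.
move=> xq; elim: j => [|j IH]; first by rewrite big_geq.
rewrite big_nat_recr //= expnS (leq_trans (_ : _ < q ^ j + x j * q ^ j)%N) //.
  by rewrite ltn_add2r.
by rewrite -[X in (X + _)%N]mul1n -mulnDl leq_mul2r add1n xq orbT.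
Qed.

Lemma digits_sum_digit (q L j : nat) (x : nat -> nat) :
  (forall i, x i < q)%N -> (j < L)%N ->
  ((\sum_(0 <= i < L) x i * q ^ i) %% q ^ j.+1 %/ q ^ j = x j)%N.
Proof.
move=> xq jL; have q0 : (0 < q)%N by apply: leq_ltn_trans (xq 0%N).
rewrite (big_cat_nat _ (n := j.+1)) //= -modnDmr.
have -> : ((\sum_(j.+1 <= i < L) x i * q ^ i) %% q ^ j.+1 = 0)%N.
  apply/eqP; rewrite -/(dvdn _ _) big_nat_cond.
  by apply: dvdn_sum => i /andP[/andP[ji _] _]; apply: dvdn_mull; rewrite dvdn_exp2l.
rewrite addn0 modn_small ?digits_sum_ltn // big_nat_recr //= addnC.
by rewrite divnMDl ?expn_gt0 ?q0 // divn_small ?addn0 // digits_sum_ltn.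
Qed.

Lemma dvdz_sub_small (m x y : int) :
  0 <= x < m -> 0 <= y < m -> (m %| x - y)%Z -> x = y.
Proof. by move=> hx hy; rewrite -eqz_mod_dvd => /eqP; rewrite !modz_small. Qed.

Definition is_residue (M : nat) (a : int) (b : nat) (rho : int) : Prop :=
  0 <= rho < M%:Z /\ (M%:Z %| rho * b%:Z - a)%Z.

Lemma is_residue_euler (M : nat) (a : int) (b : nat) : coprime b M -> (0 < M)%N ->
  is_residue M a b ((a * (b ^ (totient M).-1)%N%:Z) %% M%:Z)%Z.
Proof.
move=> cop M0; split; first by rewrite modz_ge0 ?ltz_pmod //; lia.
rewrite -eqz_mod_dvd modzMml -mulrA -PoszM -expnSr prednK ?totient_gt0 //.
have E : ((b ^ totient M)%N%:Z = 1 %[mod M%:Z])%Z.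
  by rewrite !modz_nat Euler_exp_totient.
by rewrite -modzMmr E modzMmr mulr1.
Qed.

Lemma is_residue_uniq (M b b' : nat) (a a' rho rho' : int) :
  coprime (b * b') M -> a * b'%:Z = a' * b%:Z ->
  is_residue M a b rho -> is_residue M a' b' rho' -> rho = rho'.
Proof.
move=> cop hab [hrho dvd] [hrho' dvd']; apply: dvdz_sub_small hrho hrho' _.
rewrite -(Gauss_dvdzl _ (_ : coprimez _ (b * b')%N)); last first.
  by rewrite coprimezE /= coprime_sym.
have -> : (rho - rho') * (b * b')%N%:Z =
          (rho * b%:Z - a) * b'%:Z - (rho' * b'%:Z - a') * b%:Z.
  by rewrite PoszM !mulrBl hab; ring.
by apply: rpredB; apply: dvdz_mulr.
Qed.

Lemma is_residue_scale (M c : nat) (a : int) (b : nat) (rho : int) : (0 < c)%N ->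
  is_residue M a b rho -> is_residue (c * M) (c%:Z * a) b (c%:Z * rho).
Proof.
move=> c0 [/andP[rho0 rhoM] dvd]; split.
  by rewrite PoszM mulr_ge0 //= ltr_pM2l // ltz_nat.
by rewrite PoszM -mulrA -mulrBr dvdz_mul2l // eqz_nat -lt0n.
Qed.

Lemma is_residue_mod (M m : nat) (a : int) (b : nat) (rho : int) :
  (0 < m)%N -> (m %| M)%N -> is_residue M a b rho -> is_residue m a b (rho %% m%:Z)%Z.
Proof.
move=> m0 mM [_ dvd]; split; first by rewrite modz_ge0 ?ltz_pmod //; lia.
have mM' : (m%:Z %| M%:Z)%Z by rewrite dvdzE.
rewrite -eqz_mod_dvd modzMml eqz_mod_dvd; exact: dvdz_trans mM' dvd.
Qed.

Lemma exists_residue (M : nat) (a : int) (b : nat) : coprime b M -> (0 < M)%N ->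
  exists rho, is_residue M a b rho.
Proof. by move=> cop M0; eexists; apply: is_residue_euler. Qed.

Definition qexp_den (q : nat) (r : rat) : nat := logn q `|denq r|.
Definition qunit_den (q : nat) (r : rat) : nat := (`|denq r| %/ q ^ qexp_den q r)%N.

Lemma mul_absz_denq (r : rat) : r * `|denq r|%:R = (numq r)%:~R.
Proof. by rewrite numqE; congr (_ * _); case: (denq r) (denq_gt0 r). Qed.

Lemma evval_eq (u : nat -> nat) (v : nat) :
  (exists N0, forall N, (N0 <= N)%N -> u N = v) -> evval u = v.
Proof.
move=> [N0 h0]; rewrite /evval; case: xgetP => [w _ [N1 h1] | /(_ v) []]; last by exists N0.
by rewrite -(h1 (maxn N0 N1)) ?leq_maxr // h0 // leq_maxl.
Qed.

Lemma psum_dzero (q N : nat) : psum q dzero N = 0.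
Proof. by rewrite /psum big1 // => i _; rewrite mul0r. Qed.

Section QAdicDigits.
Variable q : nat.
Hypothesis pq : prime q.

Let q0 : (0 < q)%N := prime_gt0 pq.
Let qX_gt0 (n : nat) : (0 < q ^ n)%N. Proof. by rewrite expn_gt0 q0. Qed.

Lemma qunit_denE (r : rat) : `|denq r|%N = (q ^ qexp_den q r * qunit_den q r)%N.
Proof. by rewrite mulnC divnK // pfactor_dvdnn. Qed.

Lemma mul_qden (r : rat) :
  r * (q ^ qexp_den q r * qunit_den q r)%N%:R = (numq r)%:~R.
Proof. by rewrite -qunit_denE mul_absz_denq. Qed.

Lemma coprime_qunit_den (r : rat) : coprime (qunit_den q r) q.
Proof.
rewrite coprime_sym prime_coprime //; apply/negP => hq.
have : (q ^ (qexp_den q r).+1 %| `|denq r|)%N.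
  by rewrite qunit_denE expnSr dvdn_pmul2l // qX_gt0.
by rewrite pfactor_dvdn ?absz_gt0 ?denq_neq0 // ltnn.
Qed.

Lemma coprime_qunit_denX (r : rat) (n : nat) : coprime (qunit_den q r) (q ^ n).
Proof. by rewrite coprimeXr ?coprime_qunit_den. Qed.

Lemma qexp_den_split (r : rat) (a : int) (b E : nat) : coprime b q ->
  r * (q ^ E * b)%N%:R = a%:~R ->
  exists2 t, E = (qexp_den q r + t)%N &
             a * (qunit_den q r)%:Z = numq r * (q ^ t * b)%N%:Z.
Proof.
move=> cbq hr.
have b0 : (0 < b)%N.
  by case: b cbq {hr} => //; rewrite /coprime gcd0n => /eqP q1; move: pq; rewrite q1.
have cross : numq r * (q ^ E * b)%N%:Z = a * `|denq r|%:Z.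
  by apply: (@intr_inj rat); rewrite !intrM -!pmulrn -mul_absz_denq -hr mulrAC.
have eE : (qexp_den q r <= E)%N.
  have : (`|denq r| %| `|numq r| * (q ^ E * b))%N.
    by have := congr1 absz cross; rewrite !abszM /= => ->; apply: dvdn_mull.
  rewrite Gauss_dvdr; last by rewrite coprime_sym coprime_num_den.
  have hl : logn q (q ^ E * b) = E.
    by rewrite lognM ?qX_gt0 // pfactorK // (logn_coprime (m := b)) ?addn0 // coprime_sym.
  by rewrite -{2}hl; apply: dvdn_leq_log; rewrite muln_gt0 qX_gt0.
exists (E - qexp_den q r)%N; first by rewrite subnKC.
apply: (@mulfI _ (q ^ qexp_den q r)%N%:Z); first by rewrite eqz_nat -lt0n qX_gt0.
move: cross; rewrite qunit_denE -{1}(subnKC eE) expnD !PoszM => cross.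
by rewrite -[LHS]mulrCA -cross; ring.
Qed.

(* The digits of a / (q^E b), with b prime to q, are those of the q-adic integer
   a / b shifted by E. *)
Lemma qdig_below (r : rat) (a : int) (b E : nat) (k : int) : coprime b q ->
  r * (q ^ E * b)%N%:R = a%:~R -> k + E%:Z < 0 -> qdig q r k = 0%N.
Proof.
move=> cbq hr hk; have [t Et _] := qexp_den_split cbq hr.
by rewrite /qdig -/(qexp_den q r) ifT //; lia.
Qed.

Lemma qdig_residue (r : rat) (a : int) (b E : nat) (k : int) (j : nat) (rho : int) :
  coprime b q -> r * (q ^ E * b)%N%:R = a%:~R -> k + E%:Z = j%:Z ->
  is_residue (q ^ j.+1) a b rho -> qdig q r k = `|(rho %/ (q ^ j)%N%:Z)%Z|%N.
Proof.
move=> cbq hr hkj hrho; have [t Et cross] := qexp_den_split cbq hr.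
have cop : coprime (b * qunit_den q r) (q ^ j.+1).
  by rewrite coprimeMl coprimeXr ?coprime_qunit_denX.
have cross' : a * (qunit_den q r)%:Z = (q ^ t)%N%:Z * numq r * b%:Z.
  by rewrite cross PoszM mulrA [numq r * _]mulrC.
have uniq := is_residue_uniq cop cross' hrho.
rewrite /qdig -/(qexp_den q r) -/(qunit_den q r).
case: ifPn => [hke | ].
  rewrite (uniq 0) ?div0z //; split; first by rewrite lexx ltz_nat qX_gt0.
  rewrite mul0r sub0r rpredN; apply: dvdz_mulr; rewrite dvdzE /= dvdn_exp2l //; lia.
rewrite -leNgt => hke; set jn := `|(k + (qexp_den q r)%:Z)%R|%N.
have hj : j = (t + jn)%N by rewrite /jn; lia.
have := is_residue_euler (numq r) (coprime_qunit_denX r jn.+1) (qX_gt0 _).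
move=> /(is_residue_scale (qX_gt0 t)).
rewrite -expnD addnS -hj => /uniq ->.
by rewrite hj expnD PoszM divzMpl // ltz_nat qX_gt0.
Qed.

Lemma qdig_lt (r : rat) (k : int) : (qdig q r k < q)%N.
Proof.
have [hk|hk] := ltP (k + (qexp_den q r)%:Z) 0.
  by rewrite (qdig_below (coprime_qunit_den r) (mul_qden r) hk).
set j := `|(k + (qexp_den q r)%:Z)%R|%N.
have hj : k + (qexp_den q r)%:Z = j%:Z by rewrite /j; lia.
have [rho hrho] := exists_residue (numq r) (coprime_qunit_denX r j.+1) (qX_gt0 _).
rewrite (qdig_residue (coprime_qunit_den r) (mul_qden r) hj hrho).
have [/andP[rho0 rhoM] _] := hrho.
have : (rho %/ (q ^ j)%N%:Z < q%:Z)%Z.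
  by rewrite ltz_divLR ?ltz_nat ?qX_gt0 // -PoszM -expnS.
have : 0 <= (rho %/ (q ^ j)%N%:Z)%Z by rewrite divz_ge0 // ltz_nat qX_gt0.
lia.
Qed.

Lemma qdig_isQq (r : rat) : isQq q (qdig q r).
Proof.
split=> [k|]; first exact: qdig_lt.
exists (- (qexp_den q r)%:Z) => k hk.
apply: (qdig_below (coprime_qunit_den r) (mul_qden r)); lia.
Qed.

Lemma qdig_isZq (r : rat) : ~~ (q %| `|denq r|)%N -> isZq q (qdig q r).
Proof.
move=> ndvd; split=> [|k hk]; first exact: qdig_isQq.
have e0 : qexp_den q r = 0%N by apply: logn_coprime; rewrite prime_coprime.
apply: (qdig_below (coprime_qunit_den r) (mul_qden r)); rewrite e0; lia.
Qed.

Lemma qdig_nat_dvd (s m : nat) (k : int) : (q ^ m %| s)%N -> k < m%:Z ->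
  qdig q s%:R k = 0%N.
Proof.
move=> hs hk; have hr : (s%:R : rat) * (q ^ 0 * 1)%N%:R = s%:Z%:~R by rewrite mulr1.
have [hk0|hk0] := ltP k 0; first by rewrite (qdig_below (coprime1n q) hr) ?addr0.
have hj : k + 0%N%:Z = `|k|%N%:Z by rewrite addr0; lia.
rewrite (qdig_residue (coprime1n q) hr hj (rho := 0)) ?div0z //.
split; first by rewrite lexx ltz_nat qX_gt0.
rewrite mul0r sub0r rpredN dvdzE /=; apply: dvdn_trans hs; rewrite dvdn_exp2l //; lia.
Qed.

Lemma qdig0 (k : int) : qdig q 0 k = 0%N.
Proof. by apply: (@qdig_nat_dvd 0 `|k|.+1); rewrite ?dvdn0 //; lia. Qed.

Lemma psumE (d : digits) (N : nat) : psum q d N =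
  (\sum_(0 <= i < N + N) d (i%:Z - N%:Z)%R * q ^ i)%N%:R / (q ^ N)%N%:R.
Proof.
rewrite /psum natr_sum big_mkord mulr_suml; apply: eq_bigr => i _.
by rewrite natrM natrX -mulrA expfzDr ?pnatr_eq0 -?lt0n // -exprnN natrX.
Qed.

Lemma qdig_psum (d : digits) (N : nat) (k : int) : (forall i, d i < q)%N ->
  - N%:Z <= k < N%:Z -> qdig q (psum q d N) k = d k.
Proof.
move=> hd /andP[k1 k2].
set c := (\sum_(0 <= i < N + N) d (i%:Z - N%:Z)%R * q ^ i)%N.
have hr : psum q d N * (q ^ N * 1)%N%:R = c%:Z%:~R.
  by rewrite psumE muln1 mulfVK // pnatr_eq0 -lt0n qX_gt0.
set j := `|(k + N%:Z)%R|%N.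
have hj : k + N%:Z = j%:Z by rewrite /j; lia.
have hres : is_residue (q ^ j.+1) c 1 (c %% q ^ j.+1)%N.
  split; first by rewrite lez_nat leq0n ltz_nat ltn_pmod // qX_gt0.
  by rewrite mulr1 -eqz_mod_dvd -modz_nat modz_mod.
rewrite (qdig_residue (coprime1n q) hr hj hres) divz_nat /= /c.
rewrite (digits_sum_digit (x := fun i => d (i%:Z - N%:Z)%R)) //; last by lia.
by congr d; lia.
Qed.

Lemma psum_qdig (r : rat) (N : nat) (rho : int) : (qexp_den q r <= N)%N ->
  is_residue (q ^ (N + qexp_den q r)) (numq r) (qunit_den q r) rho ->
  psum q (qdig q r) N * (q ^ qexp_den q r)%N%:R = rho%:~R.
Proof.
move=> eN hrho; set e := qexp_den q r.
have [rn rE] : exists rn : nat, rho = rn%:Z by exists `|rho|%N; case: hrho; lia.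
have hc : (\sum_(0 <= i < N + N) qdig q r (i%:Z - N%:Z)%R * q ^ i = q ^ (N - e) * rn)%N.
  rewrite (big_cat_nat _ (n := (N - e)%N)) //=; last by lia.
  rewrite big_nat_cond big1 ?add0n; last first.
    move=> i /andP[/andP[_ hi] _].
    by rewrite (qdig_below (coprime_qunit_den r) (mul_qden r)) ?mul0n //; lia.
  rewrite -{1}(add0n (N - e)%N) big_addn.
  have -> : (N + N - (N - e) = N + e)%N by lia.
  rewrite big_nat_cond (eq_bigr (fun i => rn %% q ^ i.+1 %/ q ^ i * q ^ i * q ^ (N - e))%N).
    rewrite -big_nat_cond -big_distrl -modn_exp_digits mulnC modn_small //.
    by rewrite -ltz_nat -rE; case: hrho => /andP[].
  move=> i /andP[/andP[_ hi] _]; rewrite expnD mulnA; congr (_ * _ * _)%N.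
  have hj : (i + (N - e))%N%:Z - N%:Z + e%:Z = i%:Z by lia.
  have /is_residue_mod/(_ hrho) : (q ^ i.+1 %| q ^ (N + e))%N by rewrite dvdn_exp2l.
  rewrite rE modz_nat => /(_ (qX_gt0 _)) hres.
  by rewrite (qdig_residue (coprime_qunit_den r) (mul_qden r) hj hres) divz_nat.
rewrite psumE hc rE.
have -> : (q ^ N = q ^ (N - e) * q ^ e)%N by rewrite -expnD subnK.
have qX_neq0 n : ((q ^ n)%N%:R : rat) != 0 by rewrite pnatr_eq0 -lt0n qX_gt0.
by rewrite !natrM; field; rewrite !qX_neq0.
Qed.

Lemma qdig_psum_mul (r1 r2 : rat) (N : nat) (k : int) :
  (qexp_den q r1 <= N)%N -> (qexp_den q r2 <= N)%N ->
  k + (qexp_den q r1 + qexp_den q r2)%N%:Z < N%:Z ->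
  qdig q (psum q (qdig q r1) N * psum q (qdig q r2) N) k = qdig q (r1 * r2) k.
Proof.
move=> e1N e2N hk.
set e1 := qexp_den q r1; set e2 := qexp_den q r2.
set d1 := qunit_den q r1; set d2 := qunit_den q r2.
have [rho1 h1] := exists_residue (numq r1) (coprime_qunit_denX r1 (N + e1)) (qX_gt0 _).
have [rho2 h2] := exists_residue (numq r2) (coprime_qunit_denX r2 (N + e2)) (qX_gt0 _).
have hP : psum q (qdig q r1) N * psum q (qdig q r2) N * (q ^ (e1 + e2) * 1)%N%:R =
          (rho1 * rho2)%:~R.
  by rewrite muln1 expnD natrM mulrACA (psum_qdig e1N h1) (psum_qdig e2N h2) intrM.
have hr : r1 * r2 * (q ^ (e1 + e2) * (d1 * d2))%N%:R = (numq r1 * numq r2)%:~R.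
  by rewrite expnD mulnACA natrM mulrACA !mul_qden intrM.
have cop12 : coprime (d1 * d2) q by rewrite coprimeMl !coprime_qunit_den.
have [hkE|hkE] := ltP (k + (e1 + e2)%N%:Z) 0.
  by rewrite (qdig_below (coprime1n q) hP hkE) (qdig_below cop12 hr hkE).
set j := `|(k + (e1 + e2)%N%:Z)%R|%N.
have hj : k + (e1 + e2)%N%:Z = j%:Z by rewrite /j; lia.
have cop12j : coprime (d1 * d2) (q ^ j.+1) by rewrite coprimeXr.
have [rho hrho] := exists_residue (numq r1 * numq r2) cop12j (qX_gt0 _).
rewrite (qdig_residue cop12 hr hj hrho) (qdig_residue (coprime1n q) hP hj (rho := rho)) //.
have [rho_range dvd] := hrho; have [_ dvd1] := h1; have [_ dvd2] := h2.
split=> //; rewrite -(Gauss_dvdzl _ (_ : coprimez _ (d1 * d2)%N)); last first.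
  by rewrite coprimezE /= coprimeXl // coprime_sym.
have -> : (rho * 1%N%:Z - rho1 * rho2) * (d1 * d2)%N%:Z =
          (rho * (d1 * d2)%N%:Z - numq r1 * numq r2)
          - (rho1 * d1%:Z - numq r1) * (rho2 * d2%:Z) - numq r1 * (rho2 * d2%:Z - numq r2).
  by rewrite PoszM; ring.
apply: rpredB; first apply: rpredB => //.
- apply: dvdz_mulr; apply: dvdz_trans dvd1; rewrite dvdzE /= dvdn_exp2l //; lia.
- apply: dvdz_mull; apply: dvdz_trans dvd2; rewrite dvdzE /= dvdn_exp2l //; lia.
Qed.

Lemma qadd0x (x : digits) : (forall k, x k < q)%N -> qadd q dzero x = x.
Proof.
move=> hx; apply/funext => k; apply: evval_eq; exists `|k|.+1 => N hN.
by rewrite psum_dzero add0r qdig_psum //; lia.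
Qed.

Lemma qaddx0 (x : digits) : (forall k, x k < q)%N -> qadd q x dzero = x.
Proof.
move=> hx; apply/funext => k; apply: evval_eq; exists `|k|.+1 => N hN.
by rewrite psum_dzero addr0 qdig_psum //; lia.
Qed.

Lemma qmul_qdig (r1 r2 : rat) : qmul q (qdig q r1) (qdig q r2) = qdig q (r1 * r2).
Proof.
apply/funext => k; apply: evval_eq.
exists (qexp_den q r1 + qexp_den q r2 + `|k| + 1)%N => N hN.
by apply: qdig_psum_mul; lia.
Qed.

End QAdicDigits.

Section FiniteAdeles.
Variable Sigma : set nat.
Hypothesis Sigma_prime : forall q, Sigma q -> prime q.

Lemma inAf_diag (r : rat) : inAf Sigma (afdiag Sigma r).
Proof.
split; [|split].
- by move=> q hq; rewrite /afdiag asboolF.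
- by move=> q hq; rewrite /afdiag asboolT //; apply: qdig_isQq; apply: Sigma_prime.
- apply: (@sub_finite_set _ _ `I_(`|denq r|.+1)) => // q [hq]; rewrite /afdiag asboolT //.
  move=> notZ; rewrite /= ltnS dvdn_leq ?absz_gt0 ?denq_neq0 //.
  by apply: contrapT => /negP ndvd; apply: notZ; apply: qdig_isZq ndvd; apply: Sigma_prime.
Qed.

Lemma afdiag0 : afdiag Sigma 0 = fun _ => dzero.
Proof.
apply/funext => q; rewrite /afdiag; case: asboolP => // hq.
by apply/funext => k; apply: qdig0; apply: Sigma_prime.
Qed.

Lemma afadd_diag0l (a : adele) : inAf Sigma a -> afadd Sigma (afdiag Sigma 0) a = a.
Proof.
move=> [out [inQ _]]; rewrite afdiag0; apply/funext => q; rewrite /afadd.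
have [hq|hq] := pselect (Sigma q); last by rewrite asboolF // out.
by rewrite asboolT // (qadd0x (Sigma_prime hq) (inQ q hq).1).
Qed.

Lemma afadd_diag0r (a : adele) : inAf Sigma a -> afadd Sigma a (afdiag Sigma 0) = a.
Proof.
move=> [out [inQ _]]; rewrite afdiag0; apply/funext => q; rewrite /afadd.
have [hq|hq] := pselect (Sigma q); last by rewrite asboolF // out.
by rewrite asboolT // (qaddx0 (Sigma_prime hq) (inQ q hq).1).
Qed.

Lemma afdiagM (r1 r2 : rat) :
  afmul Sigma (afdiag Sigma r1) (afdiag Sigma r2) = afdiag Sigma (r1 * r2).
Proof.
apply/funext => q; rewrite /afmul /afdiag.
have [hq|hq] := pselect (Sigma q); last by rewrite !asboolF.
by rewrite !asboolT // (qmul_qdig (Sigma_prime hq)).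
Qed.

Lemma afbasic0_diag0 (V : set adele) : afbasic0 Sigma V -> V (afdiag Sigma 0).
Proof.
move=> [U [U0 [_ ->]]]; split; first exact: inAf_diag.
by move=> q hq; rewrite afdiag0; exact: (U0 q hq).2.
Qed.

Lemma inS_mul (a b : nat) : inS Sigma a -> inS Sigma b -> inS Sigma (a * b).
Proof.
move=> Sa Sb; elim: Sa => [|p n hp _ IH]; first by rewrite mul1n.
by rewrite -mulnA; apply: inSmul.
Qed.

Lemma inS_exp (p m : nat) : Sigma p -> inS Sigma (p ^ m).
Proof. by move=> hp; elim: m => [|m IH]; [exact: inS1 | rewrite expnS; apply: inSmul]. Qed.

Lemma inS_gt0 (s : nat) : inS Sigma s -> (0 < s)%N.
Proof. by elim=> // p n hp _ n0; rewrite muln_gt0 n0 prime_gt0 ?Sigma_prime. Qed.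

Lemma afbasic0_diag_inS (V : set adele) : afbasic0 Sigma V ->
  exists2 s, inS Sigma s & V (afdiag Sigma s%:R).
Proof.
move=> [U [U0 [Ufin ->]]].
have /choice [n hn] : forall q, exists n : nat, Sigma q -> forall y, isQq q y ->
    (forall k : int, k < n%:Z -> y k = 0%N) -> U q y.
  move=> q; have [hq|hq] := pselect (Sigma q); last by exists 0%N.
  have [[_ Uopen] U0q] := U0 q hq; have [m hm] := Uopen dzero U0q.
  by exists `|m|%N => _ y yQ hy; apply: hm yQ _ => k km; apply: hy; lia.
have [l hl] := (finite_seqP _).1 Ufin.
have lSigma q : q \in l -> Sigma q.
  by move=> ql; have : [set` l] q by []; rewrite -hl => -[].
exists (\prod_(q <- l) q ^ n q)%N.
  rewrite big_seq; apply: big_ind => //; first exact: inS1; first exact: inS_mul.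
  by move=> q /lSigma /inS_exp.
split=> [|q hq]; first exact: inAf_diag.
rewrite /afdiag asboolT //; have pq := Sigma_prime hq.
have [ql|qnl] := boolP (q \in l).
  apply: (hn q hq); first exact: qdig_isQq.
  by move=> k; apply: (qdig_nat_dvd pq); rewrite (big_rem _ ql) /= dvdn_mulr.
have -> : U q = isZq q.
  apply: contrapT => hU; have : [set` l] q by rewrite -hl.
  by rewrite /mkset (negbTE qnl).
split=> [|k k0]; first exact: qdig_isQq.
by apply: (qdig_nat_dvd pq (m := 0)); rewrite ?expn0 ?dvd1n.
Qed.

Variables (Q : topologicalZmodType) (act : adele -> Q -> Q).
Hypothesis act_module : Af_module Sigma act.

Lemma act_diag0 (x : Q) : act (afdiag Sigma 0) x = 0.
Proof.
have [act_add _] := act_module; have Af0 := inAf_diag 0.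
have := act_add _ _ x Af0 Af0; rewrite afadd_diag0l // -{1}[act _ x]addr0.
by move=> /addrI <-.
Qed.

Lemma act_continuous (a : adele) : inAf Sigma a -> continuous (act a).
Proof.
move=> Afa x W /= hW; have [V [V0 [V' [hV' hVW]]]] := act_module.2.2.2.2 a x Afa W hW.
apply: filterS hV' => y V'y.
by have := hVW _ _ (afbasic0_diag0 V0) V'y; rewrite afadd_diag0r.
Qed.

Lemma act_diagM (r1 r2 : rat) (x : Q) :
  act (afdiag Sigma r1) (act (afdiag Sigma r2) x) = act (afdiag Sigma (r1 * r2)) x.
Proof.
have [_ [_ [act_mul _]]] := act_module.
by rewrite -afdiagM act_mul //; exact: inAf_diag.
Qed.

Lemma exists_inS_act_mem (C : set Q) : open C -> C 0 ->
  forall x, exists2 s, inS Sigma s & C (act (afdiag Sigma s%:R) x).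
Proof.
move=> Co C0 x.
have hC : nbhs (act (afdiag Sigma 0) x) C by rewrite act_diag0; apply: open_nbhs_nbhs.
have [V [V0 [V' [hV' hVC]]]] := act_module.2.2.2.2 _ x (inAf_diag 0) C hC.
have [s Ss Vs] := afbasic0_diag_inS V0.
exists s => //; have := hVC _ _ Vs (nbhs_singleton hV').
by rewrite afadd_diag0l //; exact: inAf_diag.
Qed.

End FiniteAdeles.

Theorem mainTheorem13 (Sigma : set nat) (Hprime : forall q, Sigma q -> prime q)
  (Q : topologicalZmodType) (act : adele -> Q -> Q)
  (HQ : hausdorff_space Q) (HQlc : locally_compact [set: Q])
  (Hmod : Af_module Sigma act)
  (C : set Q) (HCc : compact C) (HCo : open C) (HCs : subgroup C) :
  (forall x : Q, in_ZSinv_span Sigma act C x) /\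
  (exists K : set Q, compact K /\ forall x : Q, in_ZSinv_span Sigma act K x) /\
  (exists K : nat -> set Q, (forall n, compact (K n)) /\ \bigcup_n K n = setT).
Proof.
have cover x : exists2 s, inS Sigma s & exists2 c, C c & x = act (afdiag Sigma s%:R^-1) c.
  have [s Ss Csx] := exists_inS_act_mem Hprime Hmod HCo HCs.1 x.
  exists s => //; exists (act (afdiag Sigma s%:R) x) => //.
  by rewrite act_diagM // mulVf ?Hmod.2.2.2.1 // pnatr_eq0 -lt0n (inS_gt0 Hprime).
have span_C x : in_ZSinv_span Sigma act C x.
  have [s Ss [c Cc ->]] := cover x.
  exists [:: (s%:R^-1, c)]; split; last by rewrite big_seq1.
  by move=> p; rewrite inE => /eqP -> /=; split => //; exists 1, s; rewrite mul1r.
split=> //; split; first by exists C.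
exists (fun n : nat => act (afdiag Sigma n%:R^-1) @` C); split.
  move=> n; apply: continuous_compact => //; apply: continuous_subspaceT.
  exact: act_continuous (inAf_diag Hprime _).
apply/seteqP; split=> // x _; have [s _ [c Cc ->]] := cover x.
by exists s => //; exists c.
Qed.
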